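(* Let $A=(A,\wedge,\vee,\cdot,\to,1)$ be a $\mathsf{DLCMI}$ and $a\in A$. Then $(1\to a)^n\le 1\to a^n$ for every natural number $n$.
   Context: An algebra $(A,\wedge,\vee,\cdot,\to,1)$ of type $(2,2,2,2,0)$ is a $\mathsf{DLCMI}$ if for all $a,b,c\in A$: (1) $(A,\wedge,\vee)$ is a distributive lattice; (2) $1$ is its largest element; (3) $(A,\cdot,1)$ is a commutative monoid; (4) $(a\to b)\wedge(a\to c)=a\to(b\wedge c)$; (5) $(a\to c)\wedge(b\to c)=(a\vee b)\to c$; (6) $a\to a=1$; (7) $(a\vee b)\cdot c=(a\cdot c)\vee(b\cdot c)$; (8) $(a\to b)\cdot(b\to c)\le a\to c$; (9) $a\to b\le (a\cdot c)\to(b\cdot c)$. Powers: $x^0=1$, $x^{m}=x\cdot x^{m-1}$. *)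

Set Implicit Arguments.

Record DLCMI (A : Type) := {
  meet : A -> A -> A;
  join : A -> A -> A;
  mul  : A -> A -> A;
  imp  : A -> A -> A;
  one  : A;
  meet_comm  : forall a b, meet a b = meet b a;
  join_comm  : forall a b, join a b = join b a;
  meet_assoc : forall a b c, meet a (meet b c) = meet (meet a b) c;
  join_assoc : forall a b c, join a (join b c) = join (join a b) c;
  meet_absorb : forall a b, meet a (join a b) = a;
  join_absorb : forall a b, join a (meet a b) = a;
  meet_join_distr : forall a b c, meet a (join b c) = join (meet a b) (meet a c);
  one_top : forall a, meet a one = a;
  mul_assoc : forall a b c, mul a (mul b c) = mul (mul a b) c;
  mul_comm  : forall a b, mul a b = mul b a;
  mul_one   : forall a, mul a one = a;
  ax4 : forall a b c, meet (imp a b) (imp a c) = imp a (meet b c);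
  ax5 : forall a b c, meet (imp a c) (imp b c) = imp (join a b) c;
  ax6 : forall a, imp a a = one;
  ax7 : forall a b c, mul (join a b) c = join (mul a c) (mul b c);
  ax8 : forall a b c, meet (mul (imp a b) (imp b c)) (imp a c) = mul (imp a b) (imp b c);
  ax9 : forall a b c, meet (imp a b) (imp (mul a c) (mul b c)) = imp a b
}.

Definition dle (A : Type) (D : DLCMI A) (x y : A) : Prop := meet D x y = x.

Fixpoint dpow (A : Type) (D : DLCMI A) (x : A) (n : nat) : A :=
  match n with
  | O => one D
  | S m => mul D x (dpow D x m)
  end.


(* The map [x |-> 1 -> x] is submultiplicative: axiom (9) with [a := 1] gives
   [1 -> x <= y -> x y], and axiom (8) gives [(1 -> y)(y -> x y) <= 1 -> x y].
   Multiplication is monotone because it distributes over joins (axiom (7)),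
   so the theorem follows by induction on [n]. *)

Section DLCMITheory.

Variable A : Type.
Variable D : DLCMI A.

Lemma dle_refl x : dle D x x.
Proof.
  unfold dle.
  pose proof (meet_absorb D x (meet D x x)) as H.
  rewrite join_absorb in H. exact H.
Qed.

Lemma dle_trans x y z : dle D x y -> dle D y z -> dle D x z.
Proof.
  unfold dle; intros Hxy Hyz.
  rewrite <- Hxy, <- meet_assoc, Hyz. reflexivity.
Qed.

Lemma join_dle {x y} : dle D x y -> join D x y = y.
Proof.
  unfold dle; intros Hxy.
  rewrite <- Hxy, join_comm, meet_comm. apply join_absorb.
Qed.

Lemma mul_dle_monol x y c : dle D x y -> dle D (mul D x c) (mul D y c).
Proof.
  intros Hxy; unfold dle.
  rewrite <- (join_dle Hxy), ax7. apply meet_absorb.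
Qed.

Lemma mul_dle_mono x y x' y' :
  dle D x x' -> dle D y y' -> dle D (mul D x y) (mul D x' y').
Proof.
  intros Hx Hy.
  apply dle_trans with (mul D x' y).
  - apply mul_dle_monol; exact Hx.
  - rewrite (mul_comm D x' y), (mul_comm D x' y').
    apply mul_dle_monol; exact Hy.
Qed.

Lemma imp_one_dle_imp_mul x y :
  dle D (imp D (one D) x) (imp D y (mul D x y)).
Proof.
  unfold dle.
  pose proof (ax9 D (one D) x y) as H.
  rewrite (mul_comm D (one D) y), mul_one in H. exact H.
Qed.

Lemma imp_one_submul x y :
  dle D (mul D (imp D (one D) x) (imp D (one D) y))
        (imp D (one D) (mul D x y)).
Proof.
  apply dle_trans with (mul D (imp D (one D) y) (imp D y (mul D x y))).
  - rewrite (mul_comm D (imp D (one D) x)).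
    apply mul_dle_mono; [apply dle_refl | apply imp_one_dle_imp_mul].
  - apply ax8.
Qed.

End DLCMITheory.

Theorem lemma3p7 (A : Type) (D : DLCMI A) (a : A) (n : nat) :
  dle D (dpow D (imp D (one D) a) n) (imp D (one D) (dpow D a n)).
Proof.
  induction n as [|n IH]; simpl.
  - unfold dle. rewrite ax6. apply one_top.
  - apply dle_trans with (mul D (imp D (one D) a) (imp D (one D) (dpow D a n))).
    + apply mul_dle_mono; [apply dle_refl | exact IH].
    + apply imp_one_submul.
Qed.
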